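(* For every $k$-uniform hypergraph $H=(V,E)$ on $n$ vertices, $\mathrm{mms}(H)=\mu(H)$.
   Context: For $w:V\to\mathbb R$ and $X\subseteq V$ write $w(X)=\sum_{x\in X}w(x)$. Define $\mathrm{mms}(H)=\min\{|\{e\in E: w(e)\ge 0\}| : w:V\to\mathbb R,\ w(V)\ge 0\}$. A fractional cover of a hypergraph $(V,F)$ is a function $f:V\to[0,\infty)$ with $f(e)\ge 1$ for every $e\in F$; $\tau^*$ is the minimum of $f(V)$ over fractional covers, and $\nu^*$ is the fractional matching number (which equals $\tau^*$ by LP duality). For $E'\subseteq E$ let $H-E'=(V,E\setminus E')$. Define $\mu(H)=\min\{|E'|: E'\subseteq E,\ \nu^*(H-E')=\tau^*(H-E')<n/k\}$. *)

From mathcomp Require Import all_boot all_order all_algebra.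
From mathcomp Require Import reals.
Set Implicit Arguments. Unset Strict Implicit. Unset Printing Implicit Defensive.
Import Order.TTheory GRing.Theory Num.Theory.
Local Open Scope ring_scope.

Section Hyp.
Variables (R : realType) (V : finType).

Definition wsum (w : V -> R) (X : {set V}) : R := \sum_(x in X) w x.

Definition nonneg_edges (E : {set {set V}}) (w : V -> R) : nat :=
  #|[set e in E | 0 <= wsum w e]|.

Definition is_mms (E : {set {set V}}) (m : nat) : Prop :=
  (exists w : V -> R, 0 <= wsum w setT /\ nonneg_edges E w = m) /\
  (forall w : V -> R, 0 <= wsum w setT -> (m <= nonneg_edges E w)%N).

Definition frac_cover (F : {set {set V}}) (f : V -> R) : Prop :=
  (forall x, 0 <= f x) /\ (forall e, e \in F -> 1 <= wsum f e).

Definition is_tau_star (F : {set {set V}}) (t : R) : Prop :=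
  (exists f, frac_cover F f /\ wsum f setT = t) /\
  (forall f, frac_cover F f -> t <= wsum f setT).

Definition frac_matching (F : {set {set V}}) (g : {set V} -> R) : Prop :=
  (forall e, e \in F -> 0 <= g e) /\
  (forall x, \sum_(e in F | x \in e) g e <= 1).

Definition is_nu_star (F : {set {set V}}) (t : R) : Prop :=
  (exists g, frac_matching F g /\ \sum_(e in F) g e = t) /\
  (forall g, frac_matching F g -> \sum_(e in F) g e <= t).

Definition mu_cond (n k : nat) (F : {set {set V}}) : Prop :=
  exists t, is_nu_star F t /\ is_tau_star F t /\ t < n%:R / k%:R.

Definition is_mu (n k : nat) (E : {set {set V}}) (m : nat) : Prop :=
  (exists E' : {set {set V}}, E' \subset E /\ #|E'| = m /\ mu_cond n k (E :\: E')) /\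
  (forall E' : {set {set V}}, E' \subset E -> mu_cond n k (E :\: E') -> (m <= #|E'|)%N).

End Hyp.

From mathcomp Require Import all_boot all_order all_algebra.
From mathcomp Require Import reals ring lra.
Set Implicit Arguments. Unset Strict Implicit. Unset Printing Implicit Defensive.
Import Order.TTheory GRing.Theory Num.Theory.
Local Open Scope ring_scope.

(* Strong LP duality for fractional covers and matchings follows from Farkas' lemma,
   which is proved by Fourier-Motzkin elimination.  For a k-uniform hypergraph F on n
   vertices, nu*(F) = tau*(F) < n/k then holds iff some w with w(V) >= 0 is negative on
   every edge: an optimal cover f yields w = f(V)/n - f, while a fractional matching g
   of value at least n/k has degree 1 at every vertex, so that
   sum_e g(e) w(e) = w(V) >= 0 excludes such a w.  Hence deleting E' achieves the
   condition iff some w with w(V) >= 0 has all its nonnegative edges in E', and the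
   two minima coincide. *)

Section FourierMotzkin.
Variables (R : realFieldType) (X : finType).

(* [(a, b)] stands for the inequality [\sum_i a i * x i <= b]. *)
Definition constr := ({ffun X -> R} * R)%type.

Definition constr_add (c1 c2 : constr) : constr :=
  ([ffun i => c1.1 i + c2.1 i], c1.2 + c2.2).

Definition constr_scale (l : R) (c : constr) : constr :=
  ([ffun i => l * c.1 i], l * c.2).

Definition dot (a : {ffun X -> R}) (x : X -> R) : R := \sum_i a i * x i.

Definition satisfies (s : seq constr) (x : X -> R) :=
  forall c, c \in s -> dot c.1 x <= c.2.

Inductive consequence (s : seq constr) : constr -> Prop :=
| consequence_mem c : c \in s -> consequence s c
| consequenceD c1 c2 :
    consequence s c1 -> consequence s c2 -> consequence s (constr_add c1 c2)
| consequenceZ l c : 0 <= l -> consequence s c -> consequence s (constr_scale l c).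

Lemma consequence_trans s s' c :
  {in s', forall c' : constr, consequence s c'} -> consequence s' c -> consequence s c.
Proof.
move=> ss'; elim=> {c} [c /ss'| c1 c2 _ + _|l c l0 _] //.
- exact: consequenceD.
- exact: consequenceZ.
Qed.

Lemma dotD (a1 a2 : {ffun X -> R}) x :
  dot [ffun i => a1 i + a2 i] x = dot a1 x + dot a2 x.
Proof. by rewrite /dot -big_split; apply: eq_bigr => i _; rewrite ffunE mulrDl. Qed.

Lemma dotZ l (a : {ffun X -> R}) x : dot [ffun i => l * a i] x = l * dot a x.
Proof. by rewrite /dot mulr_sumr; apply: eq_bigr => i _; rewrite ffunE mulrA. Qed.

Lemma exists_between (L U : seq R) :
  (forall l u, l \in L -> u \in U -> l <= u) ->
  exists t, (forall l, l \in L -> l <= t) /\ (forall u, u \in U -> t <= u).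
Proof.
elim: L => [|l L IH] LU.
  elim: U {LU} => [|u U [t [_ tU]]]; first by exists 0.
  exists (Num.min t u); split => // v; rewrite inE => /predU1P [->|/tU].
    by rewrite ge_min lexx orbT.
  by rewrite ge_min => ->.
have [|t [tL tU]] := IH; first by move=> l' u lL; apply: LU; rewrite inE lL orbT.
exists (Num.max t l); split => [v|u uU].
  by rewrite inE le_max => /predU1P [->|/tL ->]; rewrite ?lexx ?orbT.
by rewrite ge_max tU //= LU // inE eqxx.
Qed.

Definition eliminate_pair (j : X) (p q : constr) : constr :=
  constr_add (constr_scale (- q.1 j) p) (constr_scale (p.1 j) q).

Definition eliminate (j : X) (s : seq constr) : seq constr :=
  [seq c : constr <- s | c.1 j == 0] ++
  [seq eliminate_pair j p q | p : constr <- [seq c : constr <- s | 0 < c.1 j],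
                              q : constr <- [seq c : constr <- s | c.1 j < 0]].

Lemma eliminate_consequence j s c : c \in eliminate j s -> consequence s c.
Proof.
rewrite mem_cat mem_filter => /orP [/andP [_ /consequence_mem //]|].
case/allpairsP => -[p q] [/=]; rewrite !mem_filter => /andP [pj ps] /andP [qj qs] ->.
by apply: consequenceD; apply: consequenceZ; rewrite ?oppr_ge0 ?ltW //; apply: consequence_mem.
Qed.

Lemma eliminate_coef j s c : c \in eliminate j s ->
  c.1 j = 0 /\ forall i, {in s, forall c' : constr, c'.1 i = 0} -> c.1 i = 0.
Proof.
rewrite mem_cat mem_filter => /orP [/andP [/eqP cj cs] | ]; first by split=> // i /(_ c cs).
case/allpairsP => -[p q] [/=]; rewrite !mem_filter => /andP [_ ps] /andP [_ qs] ->.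
by split=> [|i s0]; rewrite !ffunE /=; [ring | rewrite s0 // s0 // !mulr0 addr0].
Qed.

(* The coordinate [j] only has to lie between the lower bounds coming from the
   constraints with [c.1 j < 0] and the upper bounds from those with [0 < c.1 j];
   the constraints [eliminate_pair j p q] say exactly that these bounds are compatible. *)
Lemma satisfies_eliminate j s x : satisfies (eliminate j s) x ->
  exists y, satisfies s y.
Proof.
move=> sx; pose slack (c : constr) := (c.2 - dot c.1 x) / c.1 j.
have [t [tL tU]] : exists t,
    (forall l, l \in [seq slack q | q : constr <- s & q.1 j < 0] -> l <= t) /\
    (forall u, u \in [seq slack p | p : constr <- s & 0 < p.1 j] -> t <= u).
  apply: exists_between => _ _ /mapP [q + ->] /mapP [p + ->].
  rewrite !mem_filter => /andP [qj qs] /andP [pj ps].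
  have /sx : eliminate_pair j p q \in eliminate j s.
    by rewrite mem_cat; apply/orP; right; apply: allpairs_f; rewrite mem_filter ?pj ?qj.
  rewrite dotD !dotZ /= /slack => h.
  rewrite ler_pdivlMr // mulrAC ler_ndivrMr //; nra.
exists (fun i => if i == j then x j + t else x i) => c cs.
have -> : dot c.1 (fun i => if i == j then x j + t else x i) = dot c.1 x + c.1 j * t.
  rewrite /dot (bigD1 j) // [in RHS](bigD1 j) //= eqxx mulrDr addrAC.
  by congr (_ + _ + _); apply: eq_bigr => i /negbTE ->.
case: (ltrgtP (c.1 j) 0) => cj.
- have := tL _ (map_f slack (_ : c \in [seq q : constr <- s | q.1 j < 0])).
  by rewrite mem_filter cj cs => /(_ isT); rewrite ler_ndivrMr // mulrC; lra.
- have := tU _ (map_f slack (_ : c \in [seq q : constr <- s | 0 < q.1 j])).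
  by rewrite mem_filter cj cs => /(_ isT); rewrite ler_pdivlMr // mulrC; lra.
- rewrite cj mul0r addr0; apply: sx.
  by rewrite mem_cat mem_filter cj eqxx cs.
Qed.

Lemma farkas_supported (vs : seq X) (s : seq constr) :
  (forall c i, c \in s -> i \notin vs -> c.1 i = 0) ->
  (exists x, satisfies s x) \/ (exists2 b, b < 0 & consequence s ([ffun=> 0], b)).
Proof.
elim: vs s => [|j vs IH] s supp.
  have [/allP s_ge0 | /allPn [c cs]] := boolP (all (fun c : constr => 0 <= c.2) s).
    left; exists (fun _ => 0) => c cs.
    by rewrite /dot big1 ?s_ge0 // => i _; rewrite mulr0.
  rewrite -ltNge => c_lt0; right; exists c.2 => //.
  have -> : [ffun=> 0] = c.1 by apply/ffunP => i; rewrite ffunE supp.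
  by rewrite -surjective_pairing; apply: consequence_mem.
have supp' c i : c \in eliminate j s -> i \notin vs -> c.1 i = 0.
  move=> /eliminate_coef [cj /(_ i) ci]; have [->//|ij] := eqVneq i j.
  by move=> ivs; apply: ci => c' c's; apply: supp; rewrite // inE negb_or ij.
have [[x /satisfies_eliminate sx]|[b b_lt0 cb]] := IH (eliminate j s) supp'; first by left.
right; exists b => //; apply: consequence_trans cb => c.
exact: eliminate_consequence.
Qed.

Theorem farkas (s : seq constr) :
  (exists x, satisfies s x) \/ (exists2 b, b < 0 & consequence s ([ffun=> 0], b)).
Proof. by apply: (@farkas_supported (enum X)) => c i _; rewrite mem_enum. Qed.

End FourierMotzkin.

Lemma sum_incidence (R : comPzSemiRingType) (V : finType) (F : {set {set V}})
    (a : {set V} -> R) (b : V -> R) :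
  \sum_(e in F) a e * \sum_(v in e) b v = \sum_v b v * \sum_(e in F | v \in e) a e.
Proof.
under [RHS]eq_bigr do rewrite big_mkcondr mulr_sumr.
rewrite exchange_big; apply: eq_bigr => e _; rewrite big_mkcond mulr_sumr.
by apply: eq_bigr => v _; case: ifP; rewrite ?mulr0 // mulrC.
Qed.

Lemma sum_ifM (R : pzSemiRingType) (T : finType) (P : pred T) (c : R) (h : T -> R) :
  \sum_i (if P i then c else 0) * h i = c * \sum_(i | P i) h i.
Proof.
rewrite [in RHS]big_mkcond mulr_sumr; apply: eq_bigr => i _.
by case: ifP; rewrite ?mul0r ?mulr0.
Qed.

Lemma sum_if_eq (R : pzSemiRingType) (T : finType) (P : pred T) (t0 : T) (c : R) :
  \sum_(t | P t) (if t == t0 then c else 0) = if P t0 then c else 0.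
Proof.
rewrite big_mkcond (bigD1 t0) //= eqxx big1 ?addr0 // => t /negbTE ->.
by case: ifP.
Qed.

Section FractionalDuality.
Variables (R : realType) (V : finType) (F : {set {set V}}).

Lemma wsumT (w : V -> R) : wsum w setT = \sum_v w v.
Proof. by apply: eq_bigl => v; rewrite in_setT. Qed.

Lemma frac_weak_duality (f : V -> R) (g : {set V} -> R) :
  frac_cover F f -> frac_matching F g -> \sum_(e in F) g e <= wsum f setT.
Proof.
move=> [f_ge0 f_cov] [g_ge0 g_deg].
apply: (@le_trans _ _ (\sum_(e in F) g e * wsum f e)).
  by apply: ler_sum => e eF; apply: ler_peMr; [exact: g_ge0 | exact: f_cov].
rewrite sum_incidence wsumT; apply: ler_sum => v _.
by rewrite -[leRHS]mulr1; apply: ler_wpM2l.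
Qed.

Local Notation X := (V + {set V})%type.

Definition lp_constr (a : V -> R) (b : {set V} -> R) (r : R) : constr R X :=
  ([ffun i => match i with inl v => a v | inr e => b e end], r).

Lemma dot_lp_constr a b r (x : X -> R) :
  dot (lp_constr a b r).1 x = \sum_v a v * x (inl v) + \sum_e b e * x (inr e).
Proof. by rewrite /dot big_sumType; congr (_ + _); apply: eq_bigr => ? _; rewrite ffunE. Qed.

Definition cover_constr (e : {set V}) :=
  lp_constr (fun v => if v \in e then -1 else 0) (fun=> 0) (-1).
Definition cover_nonneg_constr (u : V) :=
  lp_constr (fun v => if v == u then -1 else 0) (fun=> 0) 0.
Definition degree_constr (u : V) :=
  lp_constr (fun=> 0) (fun e => if (e \in F) && (u \in e) then 1 else 0) 1.
Definition matching_nonneg_constr (e0 : {set V}) :=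
  lp_constr (fun=> 0) (fun e => if e == e0 then -1 else 0) 0.
Definition value_constr :=
  lp_constr (fun=> 1) (fun e => if e \in F then -1 else 0) 0.

(* In the unknowns [f := x \o inl] and [g := x \o inr]: [f] is a fractional cover,
   [g] a fractional matching, and [f(V) <= g(F)]. *)
Definition duality_system : seq (constr R X) :=
  map cover_constr (enum F) ++ map cover_nonneg_constr (enum V) ++
  map degree_constr (enum V) ++ map matching_nonneg_constr (enum F) ++ [:: value_constr].

Lemma satisfies_duality_system x : satisfies duality_system x ->
  [/\ frac_cover F (x \o inl), frac_matching F (x \o inr)
    & wsum (x \o inl) setT <= \sum_(e in F) x (inr e)].
Proof.
move=> sx; have sx_at a b r : lp_constr a b r \in duality_system ->
    \sum_v a v * x (inl v) + \sum_e b e * x (inr e) <= r.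
  by move=> /sx; rewrite dot_lp_constr.
have mul0 (T : finType) (h : T -> R) : \sum_i 0 * h i = 0.
  by rewrite big1 // => i _; rewrite mul0r.
split; first split.
- move=> u; have /sx_at : cover_nonneg_constr u \in duality_system.
    by rewrite !mem_cat (map_f cover_nonneg_constr) ?orbT ?mem_enum.
  by rewrite sum_ifM mul0 big_pred1_eq /=; lra.
- move=> e eF; have /sx_at : cover_constr e \in duality_system.
    by rewrite mem_cat (map_f cover_constr) ?mem_enum.
  by rewrite sum_ifM mul0 /wsum /=; lra.
- split=> [e eF|u].
    have /sx_at : matching_nonneg_constr e \in duality_system.
      by rewrite !mem_cat (map_f matching_nonneg_constr) ?orbT ?mem_enum.
    by rewrite sum_ifM mul0 big_pred1_eq /=; lra.
  have /sx_at : degree_constr u \in duality_system.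
    by rewrite !mem_cat (map_f degree_constr) ?orbT ?mem_enum.
  by rewrite sum_ifM mul0 /=; lra.
- have /sx_at : value_constr \in duality_system by rewrite !mem_cat mem_seq1 eqxx !orbT.
  rewrite sum_ifM wsumT /=; under eq_bigr do rewrite mul1r; lra.
Qed.

(* [al], [ga] and [la] are the multipliers of the cover, degree and value
   constraints; the sign constraints only weaken the inequalities. *)
Definition dual_multipliers (c : constr R X) : Prop :=
  exists (al : {set V} -> R) (ga : V -> R) (la : R),
  [/\ [/\ forall e, 0 <= al e, forall v, 0 <= ga v & 0 <= la],
      forall v, c.1 (inl v) <= la - \sum_(e in F | v \in e) al e,
      forall e, e \in F -> c.1 (inr e) <= \sum_(v in e) ga v - la
    & \sum_v ga v - \sum_(e in F) al e <= c.2].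

Lemma dual_multipliers_mem c : c \in duality_system -> dual_multipliers c.
Proof.
have indicator_ge0 (T : eqType) (t0 t : T) : 0 <= (if t == t0 then 1 else 0 : R).
  by case: ifP.
rewrite !mem_cat mem_seq1.
case/or4P=> [/mapP [e0 + ->] | /mapP [u _ ->] | /mapP [u _ ->] |
             /orP [/mapP [e0 _ ->] | /eqP ->]].
- rewrite mem_enum => e0F.
  exists (fun e => if e == e0 then 1 else 0), (fun=> 0), 0.
  split=> [|v|e _|] /=; rewrite ?ffunE ?big1_eq ?sum_if_eq ?e0F //=.
  + by case: ifP; lra.
  + by rewrite subr0.
  + by rewrite sub0r.
- exists (fun=> 0), (fun=> 0), 0.
  split=> [|v|e _|] /=; rewrite ?ffunE ?big1_eq ?subr0 //.
  by case: ifP; rewrite ?lerN10.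
- exists (fun=> 0), (fun v => if v == u then 1 else 0), 0.
  split=> [|v|e eF|] /=; rewrite ?ffunE ?big1_eq ?subr0 ?sum_if_eq ?eF //.
- exists (fun=> 0), (fun=> 0), 0.
  split=> [|v|e _|] /=; rewrite ?ffunE ?big1_eq ?subr0 //.
  by case: ifP; rewrite ?lerN10.
- exists (fun=> 0), (fun=> 0), 1.
  split=> [|v|e eF|] /=; rewrite ?ffunE ?big1_eq ?subr0 ?eF ?sub0r //.
Qed.

Lemma consequence_dual_multipliers c :
  consequence duality_system c -> dual_multipliers c.
Proof.
elim=> {c} [c /dual_multipliers_mem //| c1 c2 _ | l c l_ge0 _].
- move=> [al1 [ga1 [la1 [[al1_ge0 ga1_ge0 la1_ge0] hv1 he1 hb1]]]] _.
  move=> [al2 [ga2 [la2 [[al2_ge0 ga2_ge0 la2_ge0] hv2 he2 hb2]]]].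
  exists (fun e => al1 e + al2 e), (fun v => ga1 v + ga2 v), (la1 + la2).
  split=> /= [|v|e eF|]; rewrite ?ffunE ?big_split /=.
  + by split=> *; rewrite addr_ge0.
  + by have := hv1 v; have := hv2 v; lra.
  + by have := he1 e eF; have := he2 e eF; lra.
  + by lra.
- move=> [al [ga [la [[al_ge0 ga_ge0 la_ge0] hv he hb]]]].
  exists (fun e => l * al e), (fun v => l * ga v), (l * la).
  split=> /= [|v|e eF|]; rewrite ?ffunE -?mulr_sumr -?mulrBr.
  + by split=> *; rewrite mulr_ge0.
  + exact: ler_wpM2l.
  + exact: ler_wpM2l (he e eF).
  + exact: ler_wpM2l.
Qed.

(* Weighting [la <= ga(e)] by [al e] and [deg(v) <= la] by [ga v] and summing gives
   [la * al(F) <= la * ga(V)]; if [la = 0], all degrees vanish and so does [al(F)]. *)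
Lemma dual_multipliers_zero b :
  set0 \notin F -> dual_multipliers ([ffun=> 0], b) -> 0 <= b.
Proof.
move=> F_nonempty [al [ga [la [[al_ge0 ga_ge0 la_ge0] hv he /= hb]]]].
have deg_le v : \sum_(e in F | v \in e) al e <= la.
  by have := hv v; rewrite ffunE; lra.
have la_le e : e \in F -> la <= \sum_(v in e) ga v.
  by move=> eF; have := he e eF; rewrite ffunE; lra.
have al_le_deg : \sum_(e in F) al e <= \sum_v \sum_(e in F | v \in e) al e.
  rewrite -[leRHS](eq_bigr _ (fun v _ => mul1r _)) -sum_incidence.
  apply: ler_sum => e eF; apply: ler_peMr => //; rewrite sumr_const ler1n card_gt0.
  by apply: contraNneq F_nonempty => <-.
suff : \sum_(e in F) al e <= \sum_v ga v by lra.
have [la0|la_gt0] := eqVneq la 0.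
  apply: le_trans al_le_deg (le_trans _ (sumr_ge0 _ (fun v _ => ga_ge0 v))).
  by apply: sumr_le0 => v _; have := deg_le v; rewrite la0.
have {}la_gt0 : 0 < la by rewrite lt_neqAle eq_sym la_gt0.
rewrite -(ler_pM2l la_gt0).
apply: (@le_trans _ _ (\sum_(e in F) al e * \sum_(v in e) ga v)).
  by rewrite mulr_sumr; apply: ler_sum => e eF; rewrite mulrC ler_wpM2l // la_le.
rewrite sum_incidence mulr_sumr; apply: ler_sum => v _.
by rewrite mulrC ler_wpM2r.
Qed.

Theorem frac_strong_duality : set0 \notin F -> exists t : R, is_nu_star F t /\ is_tau_star F t.
Proof.
move=> F_nonempty; have [[x sx]|[b b_lt0 cb]] := farkas duality_system; last first.
  have := dual_multipliers_zero F_nonempty (consequence_dual_multipliers cb).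
  by rewrite leNgt b_lt0.
have [f_cov g_match fV_le_gF] := satisfies_duality_system sx.
have gF_le_fV := frac_weak_duality f_cov g_match.
exists (wsum (x \o inl) setT); split; split.
- by exists (x \o inr); split=> //; apply/eqP; rewrite eq_le gF_le_fV fV_le_gF.
- by move=> g; apply: frac_weak_duality.
- by exists (x \o inl).
- by move=> f /frac_weak_duality /(_ g_match); apply: le_trans.
Qed.

End FractionalDuality.

Definition negative_weighting (R : realType) (V : finType) (F : {set {set V}})
    (w : V -> R) :=
  0 <= wsum w setT /\ forall e, e \in F -> wsum w e < 0.

Section UniformHypergraph.
Variables (R : realType) (V : finType) (n k : nat) (F : {set {set V}}).
Hypotheses (k_gt0 : (0 < k)%N) (n_gt0 : (0 < n)%N) (card_V : #|V| = n)
  (F_uniform : forall e, e \in F -> #|e| = k).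

(* [w(V) = 0] and [w(e) = k f(V) / n - f(e) < 1 - 1]. *)
Lemma negative_weighting_of_cover (f : V -> R) :
  frac_cover F f -> wsum f setT < n%:R / k%:R -> exists w : V -> R, negative_weighting F w.
Proof.
move=> [_ f_cov] fV_lt; pose c := wsum f setT / n%:R.
have n_pos : (0 : R) < n%:R by rewrite ltr0n.
exists (fun v => c - f v); split.
  by rewrite /wsum sumrB sumr_const cardsT card_V -mulr_natr divfK ?gt_eqF // subrr.
move=> e eF; rewrite /wsum sumrB sumr_const F_uniform // -mulr_natr.
have : c * k%:R < 1 by rewrite mulrAC ltr_pdivrMr // mul1r -ltr_pdivlMr ?ltr0n.
by have := f_cov e eF; rewrite /wsum; lra.
Qed.

Lemma sum_degree (g : {set V} -> R) :
  \sum_v \sum_(e in F | v \in e) g e = k%:R * \sum_(e in F) g e.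
Proof.
rewrite mulr_sumr -(eq_bigr _ (fun v _ => mul1r _)) -sum_incidence.
by apply: eq_bigr => e eF; rewrite sumr_const F_uniform // mulrC mulr_natl.
Qed.

(* A fractional matching of value [n / k] has degree [1] at every vertex, so it
   would turn [w] into the convex combination [\sum_e g e * w(e) = w(V) >= 0]. *)
Lemma frac_matching_lt (w : V -> R) (g : {set V} -> R) :
  negative_weighting F w -> frac_matching F g -> \sum_(e in F) g e < n%:R / k%:R.
Proof.
move=> [wV_ge0 w_neg] [g_ge0 g_deg]; rewrite ltNge; apply/negP => gF_ge.
have k_pos : (0 : R) < k%:R by rewrite ltr0n.
have deg1 v : \sum_(e in F | v \in e) g e = 1.
  have slack_ge0 u : 0 <= 1 - \sum_(e in F | u \in e) g e by rewrite subr_ge0.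
  have slack0 : \sum_u (1 - \sum_(e in F | u \in e) g e) = 0.
    apply/eqP; rewrite eq_le sumr_ge0 // andbT sumrB sum_degree sumr_const card_V.
    by rewrite subr_le0 mulrC -ler_pdivrMr.
  by have := psumr_eq0P (fun u _ => slack_ge0 u) slack0 (i := v) isT; lra.
have [e0 /andP [e0F g_e0]] : exists e, (e \in F) && (0 < g e).
  apply: psumr_neq0P g_ge0 _; apply/eqP.
  by rewrite gt_eqF // (lt_le_trans _ gF_ge) // divr_gt0 ?ltr0n.
have : \sum_(e in F) g e * wsum w e < 0.
  rewrite (bigD1 e0) //=.
  have : g e0 * wsum w e0 < 0 by rewrite pmulr_rlt0 ?w_neg.
  have : \sum_(e in F | e != e0) g e * wsum w e <= 0.
    by apply: sumr_le0 => e /andP [eF _]; rewrite mulr_ge0_le0 ?g_ge0 ?ltW ?w_neg.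
  lra.
rewrite /wsum sum_incidence; under eq_bigr do rewrite deg1 mulr1.
by rewrite -wsumT; lra.
Qed.

Lemma mu_condP : mu_cond R n k F <-> exists w : V -> R, negative_weighting F w.
Proof.
split=> [[t [_ [[[f [f_cov <-]] _] t_lt]]] | [w w_neg]].
  exact: negative_weighting_of_cover f_cov t_lt.
have F_nonempty : set0 \notin F.
  by apply/negP => /F_uniform; rewrite cards0 => k0; move: k_gt0; rewrite -k0.
have [t [nu_t tau_t]] := frac_strong_duality R F_nonempty; exists t; split=> //; split=> //.
by have [[g [g_match <-]] _] := nu_t; apply: frac_matching_lt w_neg g_match.
Qed.

End UniformHypergraph.

Section EdgeDeletion.
Variables (R : realType) (V : finType) (n k : nat) (E : {set {set V}}).
Hypotheses (k_gt0 : (0 < k)%N) (n_gt0 : (0 < n)%N) (card_V : #|V| = n)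
  (E_uniform : forall e, e \in E -> #|e| = k).

Lemma mu_cond_deleteP (E' : {set {set V}}) :
  mu_cond R n k (E :\: E') <-> exists w : V -> R, negative_weighting (E :\: E') w.
Proof. by apply: mu_condP => // e /setDP [/E_uniform]. Qed.

Lemma mu_cond_delete_nonneg (w : V -> R) :
  0 <= wsum w setT -> mu_cond R n k (E :\: [set e in E | 0 <= wsum w e]).
Proof.
move=> wV_ge0; apply/mu_cond_deleteP; exists w; split=> // e.
by rewrite !inE negb_and => /andP [/orP [/negP//|]]; rewrite -ltNge.
Qed.

Lemma nonneg_edges_le_deleted (E' : {set {set V}}) :
  mu_cond R n k (E :\: E') ->
  exists2 w : V -> R, 0 <= wsum w setT & (nonneg_edges E w <= #|E'|)%N.
Proof.
move=> /mu_cond_deleteP [w [wV_ge0 w_neg]]; exists w => //.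
apply: subset_leq_card; apply/subsetP => e; rewrite inE => /andP [eE we_ge0].
by apply: contraTT we_ge0 => eE'; rewrite -ltNge w_neg // inE eE' eE.
Qed.

Lemma is_mu_of_is_mms m : is_mms R E m -> is_mu R n k E m.
Proof.
move=> [[w [wV_ge0 <-]] mms_min]; split.
  exists [set e in E | 0 <= wsum w e]; split; first by rewrite setIdE subsetIl.
  by split; last exact: mu_cond_delete_nonneg.
move=> E' _ /nonneg_edges_le_deleted [w' w'V_ge0].
exact/leq_trans/mms_min.
Qed.

Lemma is_mms_of_is_mu m : is_mu R n k E m -> is_mms R E m.
Proof.
move=> [[E' [_ [<- /nonneg_edges_le_deleted [w wV_ge0 w_le]]]] mu_min].
have mu_le (w' : V -> R) : 0 <= wsum w' setT -> (#|E'| <= nonneg_edges E w')%N.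
  by move=> /mu_cond_delete_nonneg; apply: mu_min; rewrite setIdE subsetIl.
by split=> [|w' /mu_le //]; exists w; split=> //; apply/eqP; rewrite eqn_leq w_le mu_le.
Qed.

End EdgeDeletion.

Theorem theorem1 (R : realType) (k n : nat) (V : finType) (E : {set {set V}}) :
  (0 < k)%N -> (0 < n)%N -> #|V| = n ->
  (forall e, e \in E -> #|e| = k) ->
  forall m : nat, is_mms R E m <-> is_mu R n k E m.
Proof.
move=> k_gt0 n_gt0 card_V E_uniform m.
by split; [apply: is_mu_of_is_mms | apply: is_mms_of_is_mu].
Qed.
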